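(* Let $G$ be a finite non-abelian group, $g\in G$, and let $\mathfrak{M}_g$ be the set of maximal subgroups $M$ of $G$ with $g^G\cap M\neq\emptyset$. Assume that for every $M\in\mathfrak{M}_g$ there exists $m\in M$ such that $g^G\cap M\subseteq m^M\subseteq g^G$. If $g^G$ is of type D, then there exist $N\in\mathfrak{M}_g$ and $n\in N$ such that $n^N$ is of type D.
   Context: For $h$ in a group $H$, $h^H$ denotes the conjugacy class of $h$ in $H$. A conjugacy class $\mathcal{O}$ of a group (regarded as a rack with $x\triangleright y=xyx^{-1}$) is of type D iff there exist $r,s\in\mathcal{O}$ with $(rs)^2\neq(sr)^2$ such that $r$ and $s$ are not conjugate in the subgroup $\langle r,s\rangle$. (In rack terms: a rack is of type D if it contains a subrack that is a disjoint union $R\sqcup S$ of two subracks with $r\triangleright(s\triangleright(r\triangleright s))\neq s$ for some $r\in R$, $s\in S$.) *)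

From mathcomp Require Import all_boot all_fingroup all_solvable.
Set Implicit Arguments. Unset Strict Implicit. Unset Printing Implicit Defensive.
Local Open Scope group_scope.

Definition typeD (gT : finGroupType) (O : {set gT}) : Prop :=
  exists r s : gT, [/\ r \in O, s \in O, (r * s) ^+ 2 != (s * r) ^+ 2
                     & s \notin r ^: <<[set r; s]>>].

(* Two elements r, s of g^G witnessing type D are conjugate in G but not in
   <r, s>, so <r, s> is a proper subgroup of G and lies in some maximal
   subgroup M.  Then r, s lie in g^G ∩ M ⊆ m^M, and type D is inherited by
   supersets of a rack. *)
From mathcomp Require Import all_boot all_fingroup all_solvable.
Set Implicit Arguments. Unset Strict Implicit. Unset Printing Implicit Defensive.
Local Open Scope group_scope.

Section TypeD.

Variable gT : finGroupType.
Implicit Types (G : {group gT}) (O : {set gT}) (r s : gT).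

Lemma typeD_subset O1 O2 : O1 \subset O2 -> typeD O1 -> typeD O2.
Proof.
move=> sO12 [r [s [rO1 sO1 ? ?]]].
by exists r, s; split=> //; apply: (subsetP sO12).
Qed.

Lemma typeD_neq0 O : typeD O -> O != set0.
Proof. by case=> r [s [rO _ _ _]]; apply/set0Pn; exists r. Qed.

Lemma gen_pair_proper_nonconj G r s :
    r \in G -> s \in G -> s \in r ^: G -> s \notin r ^: <<[set r; s]>> ->
  <<[set r; s]>> \proper G.
Proof.
move=> rG sG sCr nconj.
rewrite properEneq gen_subG subUset !sub1set rG sG !andbT; apply/eqP => defG; move: nconj.
by rewrite defG -(class_eqP sCr) class_refl.
Qed.

Lemma typeD_class_in_maximal G g :
  g \in G -> typeD (g ^: G) ->
  exists2 M : {group gT}, maximal M G & typeD (g ^: G :&: M).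
Proof.
move=> gG [r [s [rC sC ne nconj]]].
have [rG sG] : r \in G /\ s \in G by split; apply: subsetP (class_subG gG _) _ _.
have sCr : s \in r ^: G by move/class_eqP: rC => ->.
have [M maxM sHM] :=
  @maxgroup_exists _ (fun H : {group gT} => H \proper G) <<[set r; s]>>%G
    (gen_pair_proper_nonconj rG sG sCr nconj).
have [rM sM] : r \in M /\ s \in M.
  by split; apply: (subsetP sHM); apply: mem_gen; rewrite !inE eqxx ?orbT.
by exists M => //; exists r, s; rewrite !inE rC sC rM sM.
Qed.

End TypeD.

Theorem lemma2p4 (gT : finGroupType) (G : {group gT}) (g : gT) :
  ~~ abelian G -> g \in G ->
  (forall M : {group gT}, maximal M G -> g ^: G :&: M != set0 ->
     exists2 m, m \in M & (g ^: G :&: M \subset m ^: M) && (m ^: M \subset g ^: G)) ->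
  typeD (g ^: G) ->
  exists N : {group gT}, [/\ maximal N G, g ^: G :&: N != set0 &
     exists2 n, n \in N & typeD (n ^: N)].
Proof.
move=> _ gG hyp /(typeD_class_in_maximal gG)[M maxM typeD_gM].
have gM_neq0 := typeD_neq0 typeD_gM.
have [m mM /andP[gM_sub_mM _]] := hyp M maxM gM_neq0.
by exists M; split=> //; exists m => //; apply: typeD_subset typeD_gM.
Qed.
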